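(* Let $\Sigma$ be finite, $n\ge1$, $\mathbb{X}\subseteq\Sigma^n$, and let $\rho,\sigma$ be $|\mathbb{X}|\times|\mathbb{X}|$ Gram matrices of unit vectors. Then $\mathcal{D}_H(\rho,\sigma)\le\mathrm{Adv}^\star(\rho,\sigma)$.
   Context: $(A\circ B)_{ij}=A_{ij}B_{ij}$; $\|A\|$ is the operator norm, $\|A\|_{\mathrm{tr}}$ the trace norm. Hadamard product distance: $\mathcal{D}_H(\rho,\sigma)=\max_{u:\|u\|=1}\mathcal{D}(\rho\circ uu^*,\sigma\circ uu^* )$, where $\mathcal D(\rho',\sigma')=\frac12\|\rho'-\sigma'\|_{\mathrm{tr}}$ is the trace distance of density matrices. Adversary bound: for $j\in[n]$ let $\Delta_j$ be the $|\mathbb{X}|\times|\mathbb{X}|$ matrix with $(\Delta_j)_{x,y}=1-\delta_{x_j,y_j}$. $\mathrm{Adv}^\star(\rho,\sigma)=\max_{\Gamma}\|\Gamma\circ(\rho-\sigma)\|$ over Hermitian $|\mathbb{X}|\times|\mathbb{X}|$ matrices $\Gamma$ with $\|\Gamma\circ\Delta_j\|\le 1$ for all $j\in[n]$. *)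

(* Complex numbers are modelled by an arbitrary
   numClosedFieldType C (an algebraically closed field with conjugation and
   its real-closed ordered real part, e.g. algC or the genuine complex field). *)
From HB Require Import structures.
From mathcomp Require Import all_boot all_order all_algebra.
Set Implicit Arguments. Unset Strict Implicit. Unset Printing Implicit Defensive.
Import Order.TTheory GRing.Theory Num.Theory.
Local Open Scope ring_scope.

Section Defs.
Variable C : numClosedFieldType.

Definition mxstar m n (A : 'M[C]_(m, n)) : 'M[C]_(n, m) := (map_mx Num.conj A)^T.

Definition hadamard m n (A B : 'M[C]_(m, n)) : 'M[C]_(m, n) :=
  \matrix_(i, j) (A i j * B i j).

Definition hermitian n (A : 'M[C]_n) : Prop := mxstar A = A.

Definition unit_vec N (u : 'cV[C]_N) : Prop := \sum_(i < N) `|u i 0| ^+ 2 = 1.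

Definition gram_of_unit_vectors N (rho : 'M[C]_N) : Prop :=
  exists (d : nat) (V : 'M[C]_(d, N)),
    (forall i : 'I_N, \sum_(l < d) `|V l i| ^+ 2 = 1) /\ rho = mxstar V *m V.

(* eigenvalues (with multiplicity) of a square matrix: the roots of its
   characteristic polynomial, which splits since C is algebraically closed *)
Definition eigenvalues n (M : 'M[C]_n) : seq C :=
  sval (closed_field_poly_normal (char_poly M)).

Definition singular_values m n (A : 'M[C]_(m, n)) : seq C :=
  [seq sqrtC x | x <- eigenvalues (mxstar A *m A)].

Definition trnorm m n (A : 'M[C]_(m, n)) : C :=
  \sum_(s <- singular_values A) s.

Definition opnorm m n (A : 'M[C]_(m, n)) : C :=
  \big[Num.max/0]_(s <- singular_values A) s.

Definition trace_dist n (r s : 'M[C]_n) : C := trnorm (r - s) / 2%:R.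

Definition outer N (u : 'cV[C]_N) : 'M[C]_N := u *m mxstar u.

Definition Delta (Sigma : finType) (n : nat) (X : {set n.-tuple Sigma})
    (j : 'I_n) : 'M[C]_#|X| :=
  \matrix_(i, k) (1 - ((tnth (enum_val i) j == tnth (enum_val k) j) : nat)%:R).

Definition adv_feasible (Sigma : finType) (n : nat) (X : {set n.-tuple Sigma})
    (G : 'M[C]_#|X|) : Prop :=
  hermitian G /\ forall j : 'I_n, opnorm (hadamard G (Delta X j)) <= 1.

End Defs.

Arguments Delta {C Sigma n} X j.
Arguments adv_feasible {C Sigma n} X G.

(* Let A := (rho - sigma) o uu^*.  It is Hermitian, and traceless because rho and
   sigma have unit diagonal.  If E is the projector onto the positive eigenspace of A,
   then ||A||_tr = 2 tr(E A), and tr(E A) is the quadratic form of E^T o (rho - sigma)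
   at the conjugate of u, so it is at most ||Gamma o (rho - sigma)|| for Gamma := E^T.
   This Gamma is feasible: for 0 <= Gamma <= 1 the quadratic form of Gamma o Delta_j
   at v is v^* Gamma v - sum_a v_a^* Gamma v_a, where v_a keeps the coordinates x of v
   with x_j = a; both terms lie in [0, |v|^2], hence so does the absolute value of
   their difference. *)

From Pilot Require Import Defs.
From HB Require Import structures.
From mathcomp Require Import all_boot all_order all_algebra.
From mathcomp Require Import sesquilinear spectral ring.
Set Implicit Arguments. Unset Strict Implicit. Unset Printing Implicit Defensive.
Import Order.TTheory GRing.Theory Num.Theory.
Local Open Scope ring_scope.
Local Open Scope sesquilinear_scope.

Lemma char_poly_conj (R : comUnitRingType) N (P M : 'M[R]_N) :
  P \in unitmx -> char_poly (invmx P *m M *m P) = char_poly M.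
Proof.
move=> Pu; have PVP : invmx P *m P = 1%:M by rewrite mulVmx.
rewrite /char_poly; have -> : char_poly_mx (invmx P *m M *m P) =
    map_mx polyC (invmx P) *m char_poly_mx M *m map_mx polyC P.
  rewrite /char_poly_mx mulmxBr mulmxBl -!map_mxM; congr (_ - _).
  by rewrite mul_mx_scalar -scalemxAl -map_mxM PVP map_mx1 scalemx1.
rewrite !det_mulmx mulrAC -det_mulmx -map_mxM PVP.
by rewrite map_mx1 det1 mul1r.
Qed.

Lemma bigmax_nneg_ub (R : numDomainType) (s : seq R) :
  all (>= 0) s ->
  0 <= \big[Num.max/0]_(x <- s) x /\ {in s, forall x, x <= \big[Num.max/0]_(y <- s) y}.
Proof.
elim: s => [|a s IHs]; first by rewrite big_nil.
rewrite big_cons /= => /andP[a_ge0 /IHs[m_ge0 ub_m]].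
case: (real_leP (ger0_real a_ge0) (ger0_real m_ge0)) => [a_le_m|m_lt_a].
  by split=> // x; rewrite inE => /predU1P[->|/ub_m].
split=> // x; rewrite inE => /predU1P[->|/ub_m x_le_m] //.
exact: le_trans x_le_m (ltW m_lt_a).
Qed.

Lemma bigmax_nneg_le (R : numDomainType) (s : seq R) (c : R) :
  0 <= c -> all (>= 0) s -> {in s, forall x, x <= c} ->
  \big[Num.max/0]_(x <- s) x <= c.
Proof.
move=> c_ge0; elim: s => [|a s IHs] /=; first by rewrite big_nil.
move=> /andP[a_ge0 s_ge0] le_c; rewrite big_cons.
have [m_ge0 _] := bigmax_nneg_ub s_ge0.
have a_le_c : a <= c by apply: le_c; rewrite mem_head.
have m_le_c : \big[Num.max/0]_(x <- s) x <= c.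
  by apply: IHs => // x xs; apply: le_c; rewrite inE xs orbT.
by case: (real_leP (ger0_real a_ge0) (ger0_real m_ge0)).
Qed.

Lemma ler_dist_nneg (R : numDomainType) (x y c : R) :
  0 <= x <= c -> 0 <= y <= c -> `|x - y| <= c.
Proof.
move=> /andP[x_ge0 x_le_c] /andP[y_ge0 y_le_c].
rewrite real_ler_norml ?rpredB ?ger0_real //; apply/andP; split.
  by rewrite (le_trans _ (ler_wpDl x_ge0 (lexx _))) ?lerN2.
by rewrite (le_trans _ x_le_c) // gerBl.
Qed.

Section Spectral.
Variable C : numClosedFieldType.

Definition qform N (H : 'M[C]_N) (v : 'cV[C]_N) : C := (v ^t* *m H *m v) 0 0.
Definition sqnorm N (v : 'cV[C]_N) : C := \sum_i `|v i 0| ^+ 2.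

Lemma mxstarE m n (A : 'M[C]_(m, n)) : mxstar A = A ^t*.
Proof. by rewrite /mxstar map_trmx. Qed.

Lemma qformE N (H : 'M[C]_N) v :
  qform H v = \sum_i \sum_j (v i 0)^* * H i j * v j 0.
Proof.
rewrite /qform !mxE exchange_big; apply: eq_bigr => j _.
by rewrite mxE big_distrl; apply: eq_bigr => i _; rewrite !mxE.
Qed.

Lemma sqnormE N (v : 'cV[C]_N) : sqnorm v = (v ^t* *m v) 0 0.
Proof. by rewrite mxE; apply: eq_bigr => i _; rewrite !mxE normCK mulrC. Qed.

Lemma sqnorm_conj N (v : 'cV[C]_N) : sqnorm (map_mx Num.conj v) = sqnorm v.
Proof. by apply: eq_bigr => i _; rewrite mxE norm_conjC. Qed.

Lemma sqnorm_unitary N (P : 'M[C]_N) v :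
  P \is unitarymx -> sqnorm (P *m v) = sqnorm v.
Proof.
move=> /unitarymxP /mulmx1C PtP.
by rewrite !sqnormE trmx_mul map_mxM -mulmxA (mulmxA (P ^t*)) PtP mul1mx.
Qed.

Lemma qform_spectral N (P : 'M[C]_N) (d : 'rV[C]_N) v :
  qform (P ^t* *m diag_mx d *m P) v = \sum_k d 0 k * `|(P *m v) k 0| ^+ 2.
Proof.
have -> : qform (P ^t* *m diag_mx d *m P) v = qform (diag_mx d) (P *m v).
  by rewrite /qform trmx_mul map_mxM !mulmxA.
rewrite /qform mul_mx_diag !mxE; apply: eq_bigr => k _.
by rewrite !mxE normCK; ring.
Qed.

Lemma spectral_mxstar N (P : 'M[C]_N) (d : 'rV[C]_N) :
  (P ^t* *m diag_mx d *m P) ^t* = P ^t* *m diag_mx (map_mx Num.conj d) *m P.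
Proof. by rewrite !trmx_mul !map_mxM trmxCK tr_diag_mx map_diag_mx mulmxA. Qed.

Lemma eigenvalues_spectral N (P : 'M[C]_N) (d : 'rV[C]_N) :
  P \is unitarymx ->
  perm_eq (eigenvalues (P ^t* *m diag_mx d *m P)) [seq d 0 k | k <- enum 'I_N].
Proof.
move=> Pu; rewrite /eigenvalues; case: closed_field_poly_normal => r /= charE.
rewrite -invmx_unitary // char_poly_conj ?unitarymx_unit // in charE.
rewrite (monicP (char_poly_monic _)) scale1r char_poly_trig ?diag_mx_is_trig // in charE.
apply: prod_XsubC_eq; rewrite -charE big_map big_enum /=.
by apply: eq_bigr => i _; rewrite mxE eqxx mulr1n.
Qed.

Lemma singular_values_spectral N (P : 'M[C]_N) (d : 'rV[C]_N) :
  P \is unitarymx ->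
  perm_eq (singular_values (P ^t* *m diag_mx d *m P)) [seq `|d 0 k| | k <- enum 'I_N].
Proof.
move=> Pu; have gramE : mxstar (P ^t* *m diag_mx d *m P) *m (P ^t* *m diag_mx d *m P)
    = P ^t* *m diag_mx (\row_k (`|d 0 k| ^+ 2)) *m P.
  rewrite mxstarE spectral_mxstar -!mulmxA; congr (_ *m _).
  rewrite !mulmxA -(mulmxA _ P) (unitarymxP Pu) mulmx1 mulmx_diag.
  by congr (diag_mx _ *m _); apply/rowP => k; rewrite !mxE normCK mulrC.
rewrite /singular_values gramE.
have <- : [seq sqrtC x | x <- [seq (\row_k (`|d 0 k| ^+ 2)) 0 k | k <- enum 'I_N]]
    = [seq `|d 0 k| | k <- enum 'I_N].
  by rewrite -map_comp; apply: eq_map => k /=; rewrite mxE sqrCK.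
exact/perm_map/eigenvalues_spectral.
Qed.

Lemma trnorm_spectral N (P : 'M[C]_N) (d : 'rV[C]_N) :
  P \is unitarymx -> trnorm (P ^t* *m diag_mx d *m P) = \sum_k `|d 0 k|.
Proof.
move=> Pu; rewrite /trnorm (perm_big _ (singular_values_spectral d Pu)).
by rewrite big_map big_enum.
Qed.

Lemma singular_values_spectral_ge0 N (P : 'M[C]_N) (d : 'rV[C]_N) :
  P \is unitarymx -> all (>= 0) (singular_values (P ^t* *m diag_mx d *m P)).
Proof.
move=> Pu; apply/allP => x.
by rewrite (perm_mem (singular_values_spectral d Pu)) => /mapP[k _ ->].
Qed.

Lemma opnorm_spectral_ge N (P : 'M[C]_N) (d : 'rV[C]_N) k :
  P \is unitarymx -> `|d 0 k| <= opnorm (P ^t* *m diag_mx d *m P).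
Proof.
move=> Pu; have [_ ub] := bigmax_nneg_ub (singular_values_spectral_ge0 d Pu).
by apply: ub; rewrite (perm_mem (singular_values_spectral d Pu)); apply: map_f; rewrite mem_enum.
Qed.

Lemma opnorm_spectral_le N (P : 'M[C]_N) (d : 'rV[C]_N) (c : C) :
  P \is unitarymx -> 0 <= c -> (forall k, `|d 0 k| <= c) ->
  opnorm (P ^t* *m diag_mx d *m P) <= c.
Proof.
move=> Pu c_ge0 le_c; apply: bigmax_nneg_le (singular_values_spectral_ge0 d Pu) _ => //.
by move=> x; rewrite (perm_mem (singular_values_spectral d Pu)) => /mapP[k _ ->].
Qed.

Lemma normalmx_spectral N (H : 'M[C]_N) : H \is normalmx ->
  exists P (d : 'rV[C]_N), P \is unitarymx /\ H = P ^t* *m diag_mx d *m P.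
Proof.
move=> /orthomx_spectralP Hspec; exists (spectralmx H), (spectral_diag H).
by rewrite -invmx_unitary ?spectral_unitarymx.
Qed.

Lemma normalmx_qform_le N (H : 'M[C]_N) v : H \is normalmx ->
  `|qform H v| <= opnorm H * sqnorm v.
Proof.
move=> /normalmx_spectral[P [d [Pu ->]]].
rewrite qform_spectral -(sqnorm_unitary v Pu) /sqnorm mulr_sumr.
apply: le_trans (ler_norm_sum _ _ _) _; apply: ler_sum => k _.
by rewrite normrM normrX normr_id ler_wpM2r ?exprn_ge0 ?opnorm_spectral_ge.
Qed.

Lemma normalmx_opnorm_le N (H : 'M[C]_N) (c : C) : H \is normalmx -> 0 <= c ->
  (forall v, `|qform H v| <= c * sqnorm v) -> opnorm H <= c.
Proof.
move=> /normalmx_spectral[P [d [Pu ->]]] c_ge0 le_c.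
apply: opnorm_spectral_le => // k; set e : 'cV[C]_N := delta_mx k 0.
have sum_e f : \sum_l f l * `|e l 0| ^+ 2 = f k.
  rewrite (bigD1 k) //= big1 => [|l /negbTE lk]; last by rewrite mxE lk normr0 expr0n mulr0.
  by rewrite mxE !eqxx normr1 expr1n mulr1 addr0.
have := le_c (P ^t* *m e).
rewrite qform_spectral -(sqnorm_unitary _ Pu) mulmxA (unitarymxP Pu) mul1mx sum_e.
suff -> : sqnorm e = 1 by rewrite mulr1.
by rewrite -[RHS](sum_e (fun=> 1)); apply: eq_bigr => l _; rewrite mul1r.
Qed.

Lemma normalmx_trnorm_ge0 N (H : 'M[C]_N) : H \is normalmx -> 0 <= trnorm H.
Proof.
by move=> /normalmx_spectral[P [d [Pu ->]]]; rewrite trnorm_spectral // sumr_ge0.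
Qed.

Lemma selfadjoint_normalmx N (H : 'M[C]_N) : H ^t* = H -> H \is normalmx.
Proof. by move=> HH; apply/normalmxP; rewrite HH. Qed.

Lemma mxstar_hermsymmx N (H : 'M[C]_N) : H ^t* = H -> H \is hermsymmx.
Proof. by move=> HH; apply/is_hermitianmxP; rewrite expr0 scale1r HH. Qed.

Definition effect N (E : 'M[C]_N) :=
  E ^t* = E /\ forall v, 0 <= qform E v <= sqnorm v.

Lemma effect_spectral_indicator N (P : 'M[C]_N) (b : pred 'I_N) :
  P \is unitarymx -> effect (P ^t* *m diag_mx (\row_k (b k)%:R) *m P).
Proof.
move=> Pu; split.
  by rewrite spectral_mxstar; congr (_ *m diag_mx _ *m _); apply/rowP => k; rewrite !mxE conjC_nat.
move=> v; rewrite qform_spectral -(sqnorm_unitary v Pu) /sqnorm.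
rewrite sumr_ge0 ?ler_sum // => k _; rewrite mxE;
  by case: (b k); rewrite ?mul1r ?mul0r ?exprn_ge0.
Qed.

Lemma qform_trmx N (H : 'M[C]_N) v : qform H^T v = qform H (map_mx Num.conj v).
Proof.
have trE (M : 'M[C]_1) : M 0 0 = M^T 0 0 by rewrite mxE.
rewrite /qform trE !trmx_mul trmxK mulmxA -map_trmx; congr ((_ *m _ *m _) 0 0).
all: by rewrite ?map_trmx ?map_mxCK ?trmxK.
Qed.

Lemma effect_trmx N (E : 'M[C]_N) : effect E -> effect E^T.
Proof.
move=> [EH Ebd]; split; first by rewrite -{2}EH map_trmx.
by move=> v; rewrite qform_trmx -sqnorm_conj; apply: Ebd.
Qed.

Lemma mxtrace_unitary_conj N (P M : 'M[C]_N) :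
  P \is unitarymx -> \tr (P ^t* *m M *m P) = \tr M.
Proof. by move=> Pu; rewrite mxtrace_mulC mulmxA (unitarymxP Pu) mul1mx. Qed.

Lemma spectral_mul N (P : 'M[C]_N) (a b : 'rV[C]_N) : P \is unitarymx ->
  (P ^t* *m diag_mx a *m P) *m (P ^t* *m diag_mx b *m P) =
  P ^t* *m diag_mx (\row_k (a 0 k * b 0 k)) *m P.
Proof.
move=> Pu; rewrite !mulmxA -(mulmxA _ P) (unitarymxP Pu) mulmx1 -(mulmxA _ (diag_mx a)).
by rewrite mulmx_diag.
Qed.

Lemma trnorm_traceless_hermitian N (A : 'M[C]_N) : A ^t* = A -> \tr A = 0 ->
  exists2 E, effect E & trnorm A = 2 * \tr (E *m A).
Proof.
move=> AH trA0; have Aherm := mxstar_hermsymmx AH.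
have /orthomx_spectralP := selfadjoint_normalmx AH.
have /mxOverP dR := hermitian_spectral_diag_real Aherm.
have Pu := spectral_unitarymx A.
rewrite invmx_unitary //; set P := spectralmx A in Pu *; set d := spectral_diag A in dR * => Aspec.
pose e : 'rV[C]_N := \row_k ([pred k | 0 < d 0 k] k)%:R.
exists (P ^t* *m diag_mx e *m P); first exact: effect_spectral_indicator.
have sum_d0 : \sum_k d 0 k = 0 by rewrite -mxtrace_diag -(mxtrace_unitary_conj _ Pu) -Aspec.
have norm_d k : `|d 0 k| = 2 * (e 0 k * d 0 k) - d 0 k.
  rewrite mxE /=; case: (real_le0P (dR 0 k)) => _; rewrite ?mul0r ?mul1r.
  - by rewrite mulr0 sub0r.
  - by rewrite mulr_natl mulr2n addrK.
rewrite Aspec trnorm_spectral // (eq_bigr _ (fun k _ => norm_d k)).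
rewrite sumrB sum_d0 subr0 -mulr_sumr spectral_mul // mxtrace_unitary_conj //.
by rewrite mxtrace_diag; under [in RHS]eq_bigr => k _ do rewrite mxE.
Qed.

End Spectral.

Section Adversary.
Variable C : numClosedFieldType.

Lemma hadamard_mxstar m n (A B : 'M[C]_(m, n)) :
  (hadamard A B) ^t* = hadamard (A ^t*) (B ^t*).
Proof. by apply/matrixP => i j; rewrite !mxE rmorphM. Qed.

Lemma hadamardBl m n (A B D : 'M[C]_(m, n)) :
  hadamard (A - B) D = hadamard A D - hadamard B D.
Proof. by apply/matrixP => i j; rewrite !mxE mulrBl. Qed.

Lemma outer_mxstar N (u : 'cV[C]_N) : (outer u) ^t* = outer u.
Proof. by rewrite /outer mxstarE trmx_mul map_mxM trmxCK. Qed.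

Lemma mxtrace_hadamard_outer N (D : 'M[C]_N) (u : 'cV[C]_N) :
  \tr (hadamard D (outer u)) = \sum_i D i i * `|u i 0| ^+ 2.
Proof. by apply: eq_bigr => i _; rewrite !mxE big_ord1 !mxE normCK. Qed.

Lemma mxtrace_mul_hadamard_outer N (E D : 'M[C]_N) (u : 'cV[C]_N) :
  \tr (E *m hadamard D (outer u)) = qform (hadamard E^T D) (map_mx Num.conj u).
Proof.
rewrite qformE exchange_big; apply: eq_bigr => x _; rewrite mxE.
by apply: eq_bigr => y _; rewrite !mxE big_ord1 !mxE conjCK; ring.
Qed.

Lemma gram_mxstar N (rho : 'M[C]_N) : gram_of_unit_vectors rho -> rho ^t* = rho.
Proof. by move=> [d [V [_ ->]]]; rewrite mxstarE trmx_mul map_mxM trmxCK. Qed.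

Lemma gram_diag N (rho : 'M[C]_N) : gram_of_unit_vectors rho -> forall i, rho i i = 1.
Proof.
move=> [d [V [V_unit ->]]] i; rewrite -(V_unit i) !mxE.
by apply: eq_bigr => l _; rewrite !mxE normCK mulrC.
Qed.

Variables (Sigma : finType) (n : nat) (X : {set n.-tuple Sigma}).

Definition slice (j : 'I_n) (a : Sigma) (v : 'cV[C]_#|X|) : 'cV[C]_#|X| :=
  \col_i (v i 0 * (tnth (enum_val i) j == a)%:R).

Lemma Delta_mxstar j : (Delta X j : 'M[C]_#|X|) ^t* = Delta X j.
Proof. by apply/matrixP => x y; rewrite !mxE rmorphB /= conjC1 conjC_nat eq_sym. Qed.

Lemma qform_hadamard_Delta j (G : 'M[C]_#|X|) v :
  qform (hadamard G (Delta X j)) v = qform G v - \sum_a qform G (slice j a v).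
Proof.
under eq_bigr do rewrite qformE; rewrite !qformE.
rewrite [Z in _ - Z]exchange_big /= -sumrB; apply: eq_bigr => x _.
rewrite [Z in _ - Z]exchange_big /= -sumrB; apply: eq_bigr => y _.
rewrite (bigD1 (tnth (enum_val x) j)) //= big1 => [|a /negbTE xj_a]; last first.
  by rewrite !mxE eq_sym xj_a mulr0 rmorph0 !mul0r.
rewrite !mxE eqxx addr0 [tnth (enum_val y) j == _]eq_sym.
by case: eqP => _ /=; rewrite ?mulr1 ?mulr0 ?subrr; ring.
Qed.

Lemma sqnorm_slice j v : \sum_a sqnorm (slice j a v) = sqnorm v.
Proof.
rewrite exchange_big; apply: eq_bigr => x _.
rewrite (bigD1 (tnth (enum_val x) j)) //= big1 => [|a /negbTE xj_a].
  by rewrite !mxE eqxx mulr1 addr0.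
by rewrite !mxE eq_sym xj_a mulr0 normr0 expr0n.
Qed.

Lemma effect_adv_feasible (G : 'M[C]_#|X|) : effect G -> adv_feasible X G.
Proof.
move=> [GH Gbd]; split=> [|j]; first by rewrite /Defs.hermitian mxstarE.
have GDH : (hadamard G (Delta X j)) ^t* = hadamard G (Delta X j).
  by rewrite hadamard_mxstar GH Delta_mxstar.
apply: normalmx_opnorm_le (selfadjoint_normalmx GDH) ler01 _ => v.
rewrite mul1r qform_hadamard_Delta; apply: ler_dist_nneg => //.
rewrite -(sqnorm_slice j v) sumr_ge0 ?ler_sum // => a _; by case/andP: (Gbd (slice j a v)).
Qed.

End Adversary.

Theorem proposition2p1 (C : numClosedFieldType) (Sigma : finType) (n : nat)
    (hn : (1 <= n)%N) (X : {set n.-tuple Sigma}) (rho sigma : 'M[C]_#|X|) :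
  gram_of_unit_vectors rho -> gram_of_unit_vectors sigma ->
  forall u : 'cV[C]_#|X|, unit_vec u ->
  exists G : 'M[C]_#|X|, adv_feasible X G /\
    trace_dist (hadamard rho (outer u)) (hadamard sigma (outer u))
      <= opnorm (hadamard G (rho - sigma)).
Proof.
move=> rho_gram sigma_gram u u_unit.
have DH : (rho - sigma) ^t* = rho - sigma.
  by rewrite raddfB /= map_mxB (gram_mxstar rho_gram) (gram_mxstar sigma_gram).
set A := hadamard (rho - sigma) (outer u).
have AH : A ^t* = A by rewrite hadamard_mxstar DH outer_mxstar.
have trA0 : \tr A = 0.
  rewrite mxtrace_hadamard_outer big1 // => i _.
  by rewrite !mxE (gram_diag rho_gram) (gram_diag sigma_gram) subrr mul0r.
have [E E_effect trnormA] := trnorm_traceless_hermitian AH trA0.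
exists E^T; split; first exact/effect_adv_feasible/effect_trmx.
have := normalmx_trnorm_ge0 (selfadjoint_normalmx AH).
rewrite /trace_dist -hadamardBl -/A trnormA [2 * _ / 2]mulrC mulKf ?pnatr_eq0 //.
rewrite mxtrace_mul_hadamard_outer pmulr_rge0 // => qform_ge0.
rewrite -(ger0_norm qform_ge0).
apply: le_trans (normalmx_qform_le _ (selfadjoint_normalmx _)) _.
  by rewrite hadamard_mxstar (proj1 (effect_trmx E_effect)) DH.
by rewrite sqnorm_conj [sqnorm u]u_unit mulr1.
Qed.
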